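(* Consider the system of ordinary differential equations \[ \begin{aligned} \frac{dr_a}{dt} &= m_a\frac{(p_a/\theta_{aa})^{n_{aa}}}{1+(p_a/\theta_{aa})^{n_{aa}}+(p_b/\theta_b)^{n_b}}-\gamma_a r_a+A_1,\\ \frac{dr_b}{dt} &= \frac{m_b}{1+(p_a/\theta_a)^{n_a}}-\gamma_b r_b+B_1,\\ \frac{dp_a}{dt} &= k_a r_a-\delta_a p_a,\qquad \frac{dp_b}{dt} = k_b r_b-\delta_b p_b, \end{aligned} \] where $m_a,m_b,\gamma_a,\gamma_b,k_a,k_b,\delta_a,\delta_b,\theta_a,\theta_b,\theta_{aa}>0$, $A_1,B_1\ge 0$, and $n_a,n_b,n_{aa}$ are positive integers. Let $S^*=(r_a^*,r_b^*,p_a^*,p_b^* )$ be a steady state of this system with $p_a^*>0$, $p_b^*>0$. Set, with $p_a=p_a^*$, $p_b=p_b^*$, \[ X=\frac{m_a n_{aa} p_a^{n_{aa}-1}\theta_b^{n_b}\theta_{aa}^{n_{aa}}(p_b^{n_b}+\theta_b^{n_b})}{(p_a^{n_{aa}}\theta_b^{n_b}+p_b^{n_b}\theta_{aa}^{n_{aa}}+\theta_b^{n_b}\theta_{aa}^{n_{aa}})^2},\quad Y=-\frac{m_a n_b p_a^{n_{aa}}p_b^{n_b-1}\theta_b^{n_b}\theta_{aa}^{n_{aa}}}{(p_a^{n_{aa}}\theta_b^{n_b}+p_b^{n_b}\theta_{aa}^{n_{aa}}+\theta_b^{n_b}\theta_{aa}^{n_{aa}})^2},\quad Z=-\frac{m_b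 n_a p_a^{n_a-1}\theta_a^{n_a}}{(p_a^{n_a}+\theta_a^{n_a})^2}, \] and \[ \begin{aligned} \epsilon_1&=\gamma_a+\gamma_b+\delta_a+\delta_b,\\ \epsilon_2&=\gamma_a\gamma_b+(\gamma_a+\gamma_b)(\delta_a+\delta_b)+\delta_a\delta_b-k_aX,\\ \epsilon_3&=\delta_a\delta_b(\gamma_a+\gamma_b)+(\delta_a+\delta_b)\gamma_a\gamma_b-k_a(\delta_b+\gamma_b)X,\\ \epsilon_4&=\gamma_a\gamma_b\delta_a\delta_b-k_ak_bYZ-k_a\gamma_b\delta_bX. \end{aligned} \] If $\epsilon_1>0$, $\epsilon_3>0$, $\epsilon_4>0$ and $\epsilon_1\epsilon_2\epsilon_3-\epsilon_1^2\epsilon_4-\epsilon_3^2>0$, then $S^*$ is locally asymptotically stable.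
   Context: This models a two-gene network in which gene $a$ is activated by its own protein $p_a$ and repressed by protein $p_b$ (combined via a competitive OR logic), and gene $b$ is repressed by $p_a$; $r_a,r_b$ are mRNA concentrations and $p_a,p_b$ protein concentrations. A steady state is a point where all four right-hand sides vanish. *)

From Stdlib Require Import Reals.
From Coquelicot Require Import Coquelicot.
Open Scope R_scope.

Record params := mkParams {
  m_a : R; m_b : R; gam_a : R; gam_b : R; k_a : R; k_b : R;
  del_a : R; del_b : R; th_a : R; th_b : R; th_aa : R;
  A1 : R; B1 : R;
  n_a : nat; n_b : nat; n_aa : nat }.

Definition params_ok (P : params) : Prop :=
  0 < m_a P /\ 0 < m_b P /\ 0 < gam_a P /\ 0 < gam_b P /\ 0 < k_a P /\ 0 < k_b P /\
  0 < del_a P /\ 0 < del_b P /\ 0 < th_a P /\ 0 < th_b P /\ 0 < th_aa P /\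
  0 <= A1 P /\ 0 <= B1 P /\
  (0 < n_a P)%nat /\ (0 < n_b P)%nat /\ (0 < n_aa P)%nat.

Definition F_ra (P : params) (ra rb pa pb : R) : R :=
  m_a P * (pa / th_aa P) ^ (n_aa P)
    / (1 + (pa / th_aa P) ^ (n_aa P) + (pb / th_b P) ^ (n_b P))
  - gam_a P * ra + A1 P.
Definition F_rb (P : params) (ra rb pa pb : R) : R :=
  m_b P / (1 + (pa / th_a P) ^ (n_a P)) - gam_b P * rb + B1 P.
Definition F_pa (P : params) (ra rb pa pb : R) : R := k_a P * ra - del_a P * pa.
Definition F_pb (P : params) (ra rb pa pb : R) : R := k_b P * rb - del_b P * pb.

Definition is_steady_state (P : params) (ra rb pa pb : R) : Prop :=
  F_ra P ra rb pa pb = 0 /\ F_rb P ra rb pa pb = 0 /\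
  F_pa P ra rb pa pb = 0 /\ F_pb P ra rb pa pb = 0.

Definition is_solution_on (P : params) (T : Rbar) (xa xb ya yb : R -> R) : Prop :=
  (forall t, 0 < t -> Rbar_lt t T ->
     is_derive xa t (F_ra P (xa t) (xb t) (ya t) (yb t)) /\
     is_derive xb t (F_rb P (xa t) (xb t) (ya t) (yb t)) /\
     is_derive ya t (F_pa P (xa t) (xb t) (ya t) (yb t)) /\
     is_derive yb t (F_pb P (xa t) (xb t) (ya t) (yb t))) /\
  filterlim xa (at_right 0) (locally (xa 0)) /\
  filterlim xb (at_right 0) (locally (xb 0)) /\
  filterlim ya (at_right 0) (locally (ya 0)) /\
  filterlim yb (at_right 0) (locally (yb 0)).

Definition dist4 (a b c d a' b' c' d' : R) : R :=
  sqrt ((a - a') ^ 2 + (b - b') ^ 2 + (c - c') ^ 2 + (d - d') ^ 2).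

Definition loc_asympt_stable (P : params) (ra rb pa pb : R) : Prop :=
  (forall eps, 0 < eps -> exists delta, 0 < delta /\
     forall (T : Rbar) xa xb ya yb, is_solution_on P T xa xb ya yb ->
       dist4 (xa 0) (xb 0) (ya 0) (yb 0) ra rb pa pb < delta ->
       forall t, 0 <= t -> Rbar_lt t T ->
         dist4 (xa t) (xb t) (ya t) (yb t) ra rb pa pb < eps) /\
  (exists delta0, 0 < delta0 /\
     forall xa xb ya yb, is_solution_on P p_infty xa xb ya yb ->
       dist4 (xa 0) (xb 0) (ya 0) (yb 0) ra rb pa pb < delta0 ->
       is_lim xa p_infty ra /\ is_lim xb p_infty rb /\
       is_lim ya p_infty pa /\ is_lim yb p_infty pb).

Definition Dab (P : params) (pa pb : R) : R :=
  pa ^ (n_aa P) * th_b P ^ (n_b P) + pb ^ (n_b P) * th_aa P ^ (n_aa P)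
  + th_b P ^ (n_b P) * th_aa P ^ (n_aa P).

Definition Xq (P : params) (pa pb : R) : R :=
  m_a P * INR (n_aa P) * pa ^ (n_aa P - 1) * th_b P ^ (n_b P) * th_aa P ^ (n_aa P)
    * (pb ^ (n_b P) + th_b P ^ (n_b P)) / (Dab P pa pb) ^ 2.
Definition Yq (P : params) (pa pb : R) : R :=
  - (m_a P * INR (n_b P) * pa ^ (n_aa P) * pb ^ (n_b P - 1) * th_b P ^ (n_b P)
       * th_aa P ^ (n_aa P) / (Dab P pa pb) ^ 2).
Definition Zq (P : params) (pa pb : R) : R :=
  - (m_b P * INR (n_a P) * pa ^ (n_a P - 1) * th_a P ^ (n_a P)
       / (pa ^ (n_a P) + th_a P ^ (n_a P)) ^ 2).

Definition gn_eps1 (P : params) : R := gam_a P + gam_b P + del_a P + del_b P.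
Definition gn_eps2 (P : params) (pa pb : R) : R :=
  gam_a P * gam_b P + (gam_a P + gam_b P) * (del_a P + del_b P)
  + del_a P * del_b P - k_a P * Xq P pa pb.
Definition gn_eps3 (P : params) (pa pb : R) : R :=
  del_a P * del_b P * (gam_a P + gam_b P) + (del_a P + del_b P) * gam_a P * gam_b P
  - k_a P * (del_b P + gam_b P) * Xq P pa pb.
Definition gn_eps4 (P : params) (pa pb : R) : R :=
  gam_a P * gam_b P * del_a P * del_b P - k_a P * k_b P * Yq P pa pb * Zq P pa pb
  - k_a P * gam_b P * del_b P * Xq P pa pb.

(* Write [u = x - S*].  The Jacobian [J] of the network at [S*] has characteristic
   polynomial [x^4 + eps1 x^3 + eps2 x^2 + eps3 x + eps4], so the hypotheses are the
   Routh-Hurwitz conditions; being open, they also hold for [J + s I] for some [s > 0].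
   In the coordinates [z] built from the last coordinate of [u], [(J + s I) u],
   [(J + s I)^2 u], [(J + s I)^3 u], the matrix [J + s I] becomes a tridiagonal Schwarz
   matrix, for which [V = b2 b3 b4 z1^2 + b2 b3 z2^2 + b2 z3^2 + z4^2] (with [b_i > 0])
   satisfies [V' = -2 eps1(s) z4^2 <= 0] along [u' = (J + s I) u].  Along [u' = J u] this
   gives [V' <= -2 s V], and as the nonlinear part of the field is [o(|u|)], [V' <= - s V]
   near [S*].  A continuity argument on the sublevel sets of [V] then gives stability and
   [V(t) (1 + s t / 2) <= V(0)], hence convergence. *)

From Stdlib Require Import Reals Lra Psatz Lia.
From Coquelicot Require Import Coquelicot.
Open Scope R_scope.

(** * Vectors of R^4 *)

Definition vec4 := (R * R * R * R)%type.

Definition vadd (u v : vec4) : vec4 :=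
  let '(u1, u2, u3, u4) := u in let '(v1, v2, v3, v4) := v in
  (u1 + v1, u2 + v2, u3 + v3, u4 + v4).
Definition vscal (k : R) (u : vec4) : vec4 :=
  let '(u1, u2, u3, u4) := u in (k * u1, k * u2, k * u3, k * u4).
Definition vsub (u v : vec4) : vec4 :=
  let '(u1, u2, u3, u4) := u in let '(v1, v2, v3, v4) := v in
  (u1 - v1, u2 - v2, u3 - v3, u4 - v4).

Definition norm1 (u : vec4) : R :=
  let '(u1, u2, u3, u4) := u in Rabs u1 + Rabs u2 + Rabs u3 + Rabs u4.
Definition sqnorm (u : vec4) : R :=
  let '(u1, u2, u3, u4) := u in u1 ^ 2 + u2 ^ 2 + u3 ^ 2 + u4 ^ 2.

Definition wdot (w y y' : vec4) : R :=
  let '(w1, w2, w3, w4) := w in let '(y1, y2, y3, y4) := y in let '(y1', y2', y3', y4') := y' in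
  w1 * y1 * y1' + w2 * y2 * y2' + w3 * y3 * y3' + w4 * y4 * y4'.

Ltac vec_simpl := cbv beta iota zeta delta [vadd vscal vsub norm1 sqnorm wdot fst snd] in *.

Ltac split_vec := repeat match goal with |- (_, _) = (_, _) => apply f_equal2 end.

Ltac pose_new_fact H := lazymatch type of H with ?T =>
  lazymatch goal with _ : T |- _ => fail | _ => pose proof H end end.

Ltac pose_abs_nonneg :=
  repeat match goal with
  | |- context [Rabs ?x] => pose_new_fact (Rabs_pos x)
  | _ : context [Rabs ?x] |- _ => pose_new_fact (Rabs_pos x)
  end.

Ltac pose_sq_nonneg :=
  repeat match goal with
  | |- context [?x ^ 2] => pose_new_fact (pow2_ge_0 x)
  | _ : context [?x ^ 2] |- _ => pose_new_fact (pow2_ge_0 x)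
  end.

Lemma norm1_ge0 u : 0 <= norm1 u.
Proof.
  destruct u as [[[u1 u2] u3] u4]; vec_simpl. pose_abs_nonneg. lra.
Qed.

Lemma sqnorm_ge0 u : 0 <= sqnorm u.
Proof.
  destruct u as [[[u1 u2] u3] u4]; vec_simpl. pose_sq_nonneg. lra.
Qed.

Lemma norm1_add u v : norm1 (vadd u v) <= norm1 u + norm1 v.
Proof.
  destruct u as [[[u1 u2] u3] u4], v as [[[v1 v2] v3] v4]; vec_simpl.
  pose proof (Rabs_triang u1 v1); pose proof (Rabs_triang u2 v2);
  pose proof (Rabs_triang u3 v3); pose proof (Rabs_triang u4 v4); lra.
Qed.

Lemma norm1_scal k u : norm1 (vscal k u) = Rabs k * norm1 u.
Proof. destruct u as [[[u1 u2] u3] u4]; vec_simpl; rewrite !Rabs_mult; ring. Qed.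

Lemma sqnorm_le_norm1_sq u : sqnorm u <= norm1 u ^ 2.
Proof.
  destruct u as [[[u1 u2] u3] u4]; vec_simpl.
  rewrite <- (pow2_abs u1), <- (pow2_abs u2), <- (pow2_abs u3), <- (pow2_abs u4).
  pose_abs_nonneg. nra.
Qed.

Lemma norm1_sq_le u : norm1 u ^ 2 <= 4 * sqnorm u.
Proof.
  destruct u as [[[u1 u2] u3] u4]; vec_simpl.
  rewrite <- (pow2_abs u1), <- (pow2_abs u2), <- (pow2_abs u3), <- (pow2_abs u4).
  generalize (Rabs u1) (Rabs u2) (Rabs u3) (Rabs u4); intros a b c d.
  pose proof (pow2_ge_0 (a - b)); pose proof (pow2_ge_0 (a - c)); pose proof (pow2_ge_0 (a - d));
  pose proof (pow2_ge_0 (b - c)); pose proof (pow2_ge_0 (b - d)); pose proof (pow2_ge_0 (c - d)).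
  nra.
Qed.

Lemma vec4_decomp u1 u2 u3 u4 :
  (u1, u2, u3, u4) = vadd (vadd (vadd (vscal u1 (1, 0, 0, 0)) (vscal u2 (0, 1, 0, 0)))
                 (vscal u3 (0, 0, 1, 0))) (vscal u4 (0, 0, 0, 1)).
Proof. vec_simpl; split_vec; ring. Qed.

Lemma linear_norm1_bound (M : vec4 -> vec4) :
  (forall u v, M (vadd u v) = vadd (M u) (M v)) ->
  (forall k u, M (vscal k u) = vscal k (M u)) ->
  exists C, 0 <= C /\ forall u, norm1 (M u) <= C * norm1 u.
Proof.
  intros Madd Mscal.
  set (C := norm1 (M (1, 0, 0, 0)) + norm1 (M (0, 1, 0, 0))
            + norm1 (M (0, 0, 1, 0)) + norm1 (M (0, 0, 0, 1))).
  exists C; split.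
  { unfold C; pose proof (norm1_ge0 (M (1, 0, 0, 0))); pose proof (norm1_ge0 (M (0, 1, 0, 0)));
    pose proof (norm1_ge0 (M (0, 0, 1, 0))); pose proof (norm1_ge0 (M (0, 0, 0, 1))); lra. }
  intros [[[u1 u2] u3] u4]. rewrite (vec4_decomp u1 u2 u3 u4) at 1; rewrite !Madd, !Mscal.
  eapply Rle_trans; [apply norm1_add|]. rewrite norm1_scal.
  eapply Rle_trans; [apply Rplus_le_compat_r, norm1_add|]. rewrite norm1_scal.
  eapply Rle_trans; [apply Rplus_le_compat_r, Rplus_le_compat_r, norm1_add|].
  rewrite !norm1_scal. unfold C. cbn [norm1 fst snd].
  generalize (norm1_ge0 (M (1, 0, 0, 0))) (norm1_ge0 (M (0, 1, 0, 0)))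
    (norm1_ge0 (M (0, 0, 1, 0))) (norm1_ge0 (M (0, 0, 0, 1))).
  generalize (norm1 (M (1, 0, 0, 0))) (norm1 (M (0, 1, 0, 0)))
    (norm1 (M (0, 0, 1, 0))) (norm1 (M (0, 0, 0, 1))); intros.
  pose_abs_nonneg. nra.
Qed.

Lemma abs_lt_of_sq_lt x d : 0 < d -> x ^ 2 < d ^ 2 -> Rabs x < d.
Proof.
  intros Hd Hx. apply Rnot_le_lt. intro Hge.
  assert (d ^ 2 <= x ^ 2) by (rewrite <- (pow2_abs x); apply pow_incr; lra). lra.
Qed.

Lemma vadd_vsub u v : vadd u (vsub v u) = v.
Proof.
  destruct u as [[[u1 u2] u3] u4], v as [[[v1 v2] v3] v4]; vec_simpl; split_vec; ring.
Qed.

Lemma vsub_vsub u v c : vsub (vsub v c) (vsub u c) = vsub v u.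
Proof.
  destruct u as [[[u1 u2] u3] u4], v as [[[v1 v2] v3] v4], c as [[[c1 c2] c3] c4];
    vec_simpl; split_vec; ring.
Qed.

Lemma wdot_add_r w y v v' : wdot w y (vadd v v') = wdot w y v + wdot w y v'.
Proof.
  destruct w as [[[w1 w2] w3] w4], y as [[[y1 y2] y3] y4], v as [[[v1 v2] v3] v4],
    v' as [[[v1' v2'] v3'] v4']; vec_simpl; ring.
Qed.

Lemma wdot_scal_r w y k v : wdot w y (vscal k v) = k * wdot w y v.
Proof.
  destruct w as [[[w1 w2] w3] w4], y as [[[y1 y2] y3] y4], v as [[[v1 v2] v3] v4]; vec_simpl; ring.
Qed.

Lemma wdot_comm w y y' : wdot w y y' = wdot w y' y.
Proof.
  destruct w as [[[w1 w2] w3] w4], y as [[[y1 y2] y3] y4], y' as [[[y1' y2'] y3'] y4'];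
    vec_simpl; ring.
Qed.

Lemma wdot_abs_le w y y' : Rabs (wdot w y y') <= norm1 w * norm1 y * norm1 y'.
Proof.
  destruct w as [[[w1 w2] w3] w4], y as [[[y1 y2] y3] y4], y' as [[[y1' y2'] y3'] y4']; vec_simpl.
  eapply Rle_trans; [apply Rabs_triang|].
  eapply Rle_trans; [apply Rplus_le_compat_r, Rabs_triang|].
  eapply Rle_trans; [apply Rplus_le_compat_r, Rplus_le_compat_r, Rabs_triang|].
  rewrite !Rabs_mult. pose_abs_nonneg.
  set (W := Rabs w1 + Rabs w2 + Rabs w3 + Rabs w4).
  set (Y := Rabs y1 + Rabs y2 + Rabs y3 + Rabs y4).
  set (Y' := Rabs y1' + Rabs y2' + Rabs y3' + Rabs y4').
  assert (HW : Rabs w1 * Rabs y1 + Rabs w2 * Rabs y2 + Rabs w3 * Rabs y3 + Rabs w4 * Rabs y4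
                <= W * Y) by (unfold W, Y; nra).
  assert (0 <= Rabs w1 * Rabs y1) by nra; assert (0 <= Rabs w2 * Rabs y2) by nra;
  assert (0 <= Rabs w3 * Rabs y3) by nra; assert (0 <= Rabs w4 * Rabs y4) by nra.
  assert (Rabs y1' <= Y') by (unfold Y'; lra); assert (Rabs y2' <= Y') by (unfold Y'; lra);
  assert (Rabs y3' <= Y') by (unfold Y'; lra); assert (Rabs y4' <= Y') by (unfold Y'; lra).
  assert (0 <= Y') by (unfold Y'; lra).
  nra.
Qed.

Lemma wdot_coercive w1 w2 w3 w4 y : 0 < w1 -> 0 < w2 -> 0 < w3 -> 0 < w4 ->
  Rmin (Rmin w1 w2) (Rmin w3 w4) * sqnorm y <= wdot (w1, w2, w3, w4) y y.
Proof.
  intros. destruct y as [[[y1 y2] y3] y4]; vec_simpl.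
  pose proof (Rmin_l (Rmin w1 w2) (Rmin w3 w4)); pose proof (Rmin_r (Rmin w1 w2) (Rmin w3 w4)).
  pose proof (Rmin_l w1 w2); pose proof (Rmin_r w1 w2);
  pose proof (Rmin_l w3 w4); pose proof (Rmin_r w3 w4).
  pose_sq_nonneg. nra.
Qed.

(** * A differential inequality *)

Lemma eventually_pos_near (f : R -> R) x :
  ex_derive f x -> 0 < f x -> locally x (fun y => 0 < f y).
Proof.
  intros Hd Hfx. apply ex_derive_continuous in Hd.
  apply (filterlim_locally f (f x)) with (eps := mkposreal _ Hfx) in Hd.
  revert Hd; apply filter_imp. intros y Hy. apply Rabs_def2 in Hy. cbn in Hy. lra.
Qed.

Section DecayBelowLevel.

Variables (h : R -> R) (T : Rbar) (l s : R).
Hypothesis s_pos : 0 < s.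
Hypothesis h_ge0 : forall t, 0 <= h t.
Hypothesis h_right_cont : filterlim h (at_right 0) (locally (h 0)).
Hypothesis h_derivable : forall t, 0 < t -> Rbar_lt t T -> ex_derive h t.
Hypothesis h_decay : forall t, 0 < t -> Rbar_lt t T -> h t < l -> Derive h t <= - s * h t.
Hypothesis h0_lt : h 0 < l.

Let lt_T_of_le a b : a <= b -> Rbar_lt b T -> Rbar_lt a T.
Proof. intros Hab HbT. eapply Rbar_le_lt_trans; [|exact HbT]. exact Hab. Qed.

Lemma lt_right_of_0 c : h 0 < c -> exists d, 0 < d /\ forall y, 0 < y < d -> h y < c.
Proof.
  intro Hc. destruct (proj1 (filterlim_locally h (h 0)) h_right_cont
    (mkposreal _ (proj2 (Rlt_0_minus _ _) Hc))) as [d Hd].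
  exists d; split; [apply cond_pos|]. intros y Hy.
  assert (Hball : ball 0 d y) by (change (Rabs (y - 0) < d); rewrite Rminus_0_r, Rabs_right; lra).
  specialize (Hd y Hball (proj1 Hy)). apply Rabs_def2 in Hd. cbn in Hd. lra.
Qed.

Lemma lt_near x c : 0 < x -> Rbar_lt x T -> h x < c ->
  exists d, 0 < d /\ forall y, Rabs (y - x) < d -> h y < c.
Proof.
  intros Hx HxT Hc.
  destruct (eventually_pos_near (fun y => c - h y) x) as [d Hd].
  - auto_derive. apply h_derivable; assumption.
  - lra.
  - exists d; split; [apply cond_pos|]. intros y Hy. specialize (Hd y Hy). cbn in Hd. lra.
Qed.

Lemma gt_near x c : 0 < x -> Rbar_lt x T -> c < h x ->
  exists d, 0 < d /\ forall y, Rabs (y - x) < d -> c < h y.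
Proof.
  intros Hx HxT Hc.
  destruct (eventually_pos_near (fun y => h y - c) x) as [d Hd].
  - auto_derive. apply h_derivable; assumption.
  - lra.
  - exists d; split; [apply cond_pos|]. intros y Hy. specialize (Hd y Hy). cbn in Hd. lra.
Qed.

Lemma mvt_below a b : 0 < a -> a <= b -> Rbar_lt b T -> (forall t, a <= t <= b -> h t < l) ->
  exists c, a <= c <= b /\ h b - h a <= - s * h c * (b - a).
Proof.
  intros Ha Hab HbT Hl.
  destruct (MVT_gen h a b (Derive h)) as [c [Hc E]];
    rewrite ?Rmin_left, ?Rmax_right in * by lra.
  - intros x Hx. apply Derive_correct, h_derivable; [lra | apply (lt_T_of_le x b); [lra | assumption]].
  - intros x Hx. apply derivable_continuous_pt, ex_derive_Reals_0, h_derivable; [lra|].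
    apply (lt_T_of_le x b); [lra | assumption].
  - exists c; split; [assumption|]. rewrite E.
    apply Rmult_le_compat_r; [lra|].
    apply h_decay; [lra | apply (lt_T_of_le c b); [lra | assumption] |].
    apply Hl; lra.
Qed.

Lemma below_nonincreasing a b : 0 < a -> a <= b -> Rbar_lt b T ->
  (forall t, a <= t <= b -> h t < l) -> h b <= h a.
Proof.
  intros Ha Hab HbT Hl. destruct (mvt_below a b Ha Hab HbT Hl) as [c [Hc Hmvt]].
  assert (0 <= s * h c * (b - a))
    by (apply Rmult_le_pos; [apply Rmult_le_pos; [lra | apply h_ge0] | lra]).
  lra.
Qed.

Lemma below_decay a b : 0 < a -> a <= b -> Rbar_lt b T ->
  (forall t, a <= t <= b -> h t < l) -> h b * (1 + s * (b - a)) <= h a.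
Proof.
  intros Ha Hab HbT Hl. destruct (mvt_below a b Ha Hab HbT Hl) as [c [Hc Hmvt]].
  assert (h b <= h c) by (apply below_nonincreasing; try lra; auto; intros; apply Hl; lra).
  assert (0 <= s * (h c - h b) * (b - a)) by (apply Rmult_le_pos; [apply Rmult_le_pos|]; lra).
  lra.
Qed.

Lemma below_le_initial b : 0 < b -> Rbar_lt b T -> (forall t, 0 < t <= b -> h t < l) -> h b <= h 0.
Proof.
  intros Hb HbT Hl. destruct (Rle_dec (h b) (h 0)) as [|Hgt]; [assumption|].
  destruct (lt_right_of_0 (h b)) as [d [Hd Hnear]]; [lra|].
  set (a := Rmin (d / 2) b).
  assert (0 < a) by (apply Rmin_pos; lra).
  assert (a <= b) by apply Rmin_r. assert (a <= d / 2) by apply Rmin_l.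
  assert (h b <= h a) by (apply below_nonincreasing; auto; intros; apply Hl; lra).
  specialize (Hnear a ltac:(lra)). lra.
Qed.

Lemma le_initial_of_below_before m : 0 < m -> Rbar_lt m T ->
  (forall y, 0 < y < m -> h y < l) -> h m <= h 0.
Proof.
  intros Hm HmT Hbefore. apply Rnot_lt_le. intro Hgt.
  destruct (gt_near m (h 0)) as [d [Hd Hnear]]; try assumption.
  set (y := Rmax (m / 2) (m - d / 2)).
  assert (m / 2 <= y) by apply Rmax_l. assert (m - d / 2 <= y) by apply Rmax_r.
  assert (y < m) by (apply Rmax_lub_lt; lra).
  assert (h y <= h 0).
  { apply below_le_initial; [lra | apply (lt_T_of_le y m); [lra | assumption] |].
    intros; apply Hbefore; lra. }
  specialize (Hnear y ltac:(rewrite Rabs_left by lra; lra)). lra.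
Qed.

Lemma below_extends m : 0 <= m -> Rbar_lt m T -> (forall y, 0 <= y < m -> h y < l) ->
  exists d, 0 < d /\ forall y, m <= y < m + d -> h y < l.
Proof.
  intros Hm0 HmT Hbefore. destruct (Req_dec m 0) as [->|Hm].
  - destruct (lt_right_of_0 l h0_lt) as [d [Hd Hnear]]. exists d; split; [assumption|].
    intros y Hy. destruct (Req_dec y 0) as [->|]; [assumption | apply Hnear; lra].
  - assert (h m <= h 0)
      by (apply le_initial_of_below_before; [lra | assumption | intros; apply Hbefore; lra]).
    destruct (lt_near m l) as [d [Hd Hnear]]; [lra | assumption | lra |].
    exists d; split; [assumption|]. intros y Hy. apply Hnear. rewrite Rabs_right; lra.
Qed.

(* [sup {x <= t | h < l on [0, x]}] can be neither [< t] nor [= t]. *)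
Lemma stays_below t : 0 <= t -> Rbar_lt t T -> h t < l.
Proof.
  intros Ht HtT. apply Rnot_le_lt. intro Hge.
  set (E := fun x => 0 <= x <= t /\ forall y, 0 <= y <= x -> h y < l).
  assert (HE0 : E 0) by (split; [lra | intros y Hy; replace y with 0 by lra; assumption]).
  destruct (completeness E) as [m [Hub Hlub]];
    [exists t; intros x [Hx _]; lra | exists 0; exact HE0 |].
  assert (Hm0 : 0 <= m) by (apply Hub, HE0).
  assert (Hmt : m <= t) by (apply Hlub; intros x [Hx _]; lra).
  assert (Hbefore : forall y, 0 <= y < m -> h y < l).
  { intros y Hy. apply Rnot_le_lt. intro Hy'.
    assert (Hub' : is_upper_bound E y).
    { intros x [Hx Hxl]. apply Rnot_lt_le. intro Hxy. pose proof (Hxl y ltac:(lra)). lra. }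
    specialize (Hlub y Hub'). lra. }
  destruct (below_extends m Hm0 (lt_T_of_le m t Hmt HtT) Hbefore) as [d [Hd Hafter]].
  destruct (Req_dec m t) as [<-|Hmt'].
  - pose proof (Hafter m ltac:(lra)). lra.
  - assert (HE : E (Rmin (m + d / 2) t)).
    { split; [split; [apply Rmin_glb; lra | apply Rmin_r]|].
      intros y Hy. destruct (Rlt_dec y m); [apply Hbefore; lra|].
      apply Hafter. pose proof (Rmin_l (m + d / 2) t). lra. }
    specialize (Hub _ HE). assert (m < Rmin (m + d / 2) t) by (apply Rmin_glb_lt; lra). lra.
Qed.

(* The factor [1/2] comes from decaying only on [[t/2, t]]: [h] need not be differentiable at 0. *)
Lemma decay_from_initial t : 0 <= t -> Rbar_lt t T -> h t * (1 + s * t / 2) <= h 0.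
Proof.
  intros Ht HtT. destruct (Req_dec t 0) as [->|Ht0].
  { replace (1 + s * 0 / 2) with 1 by field. lra. }
  assert (Hl : forall y, 0 <= y <= t -> h y < l)
    by (intros y Hy; apply stays_below; [lra | apply (lt_T_of_le y t); [lra | assumption]]).
  assert (h t * (1 + s * (t - t / 2)) <= h (t / 2))
    by (apply below_decay; [lra | lra | assumption | intros; apply Hl; lra]).
  assert (h (t / 2) <= h 0).
  { apply below_le_initial; [lra | apply (lt_T_of_le (t / 2) t); [lra | assumption] |].
    intros; apply Hl; lra. }
  replace (1 + s * t / 2) with (1 + s * (t - t / 2)) by field. lra.
Qed.

End DecayBelowLevel.

Lemma is_lim_of_decay (f : R -> R) l s B : 0 < s ->
  (forall t, 0 <= t -> (f t - l) ^ 2 * (1 + s * t / 2) <= B) -> is_lim f p_infty l.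
Proof.
  intros Hs Hf. apply is_lim_spec. intro eps. pose proof (cond_pos eps) as He.
  assert (HB : 0 <= B).
  { specialize (Hf 0 (Rle_refl 0)). replace (1 + s * 0 / 2) with 1 in Hf by field.
    pose proof (pow2_ge_0 (f 0 - l)). lra. }
  assert (He2 : 0 < s * eps ^ 2) by (apply Rmult_lt_0_compat; [lra | apply pow_lt; lra]).
  exists (2 * B / (s * eps ^ 2)). intros t Ht. cbn.
  assert (0 <= 2 * B / (s * eps ^ 2)) by (apply Rdiv_le_0_compat; lra).
  assert (Ht0 : 0 <= t) by lra.
  assert (HBt : B < eps ^ 2 * (1 + s * t / 2)).
  { apply Rmult_lt_compat_r with (r := s * eps ^ 2) in Ht; [|exact He2].
    unfold Rdiv in Ht. rewrite Rmult_assoc, Rinv_l, Rmult_1_r in Ht by lra. nra. }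
  specialize (Hf t Ht0).
  apply Rnot_le_lt. intro Hge.
  assert (eps ^ 2 <= (f t - l) ^ 2) by (rewrite <- (pow2_abs (f t - l)); apply pow_incr; lra).
  assert (0 < 1 + s * t / 2) by nra.
  nra.
Qed.

(** * Lyapunov's direct method *)

Definition network_field (P : params) (x : vec4) : vec4 :=
  let '(x1, x2, x3, x4) := x in
  (F_ra P x1 x2 x3 x4, F_rb P x1 x2 x3 x4, F_pa P x1 x2 x3 x4, F_pb P x1 x2 x3 x4).

Section Lyapunov.

Variables (P : params) (c1 c2 c3 c4 : R).
Variables (V : vec4 -> R) (dV : vec4 -> vec4 -> R) (m M s r : R).
Hypotheses (m_pos : 0 < m) (s_pos : 0 < s) (r_pos : 0 < r).
Hypothesis V_lower : forall x, m * sqnorm (vsub x (c1, c2, c3, c4)) <= V x.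
Hypothesis V_upper : forall x, V x <= M * sqnorm (vsub x (c1, c2, c3, c4)).
Hypothesis V_continuous : forall x eps, 0 < eps ->
  exists delta, 0 < delta /\ forall y, norm1 (vsub y x) < delta -> Rabs (V y - V x) < eps.
Hypothesis V_derive : forall (f1 f2 f3 f4 : R -> R) t v1 v2 v3 v4,
  is_derive f1 t v1 -> is_derive f2 t v2 -> is_derive f3 t v3 -> is_derive f4 t v4 ->
  is_derive (fun t => V (f1 t, f2 t, f3 t, f4 t)) t (dV (f1 t, f2 t, f3 t, f4 t) (v1, v2, v3, v4)).
Hypothesis V_decrease : forall x, sqnorm (vsub x (c1, c2, c3, c4)) < r ^ 2 ->
  dV x (network_field P x) <= - s * V x.

Section Trajectory.

Variables (T : Rbar) (xa xb ya yb : R -> R).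
Hypothesis sol : is_solution_on P T xa xb ya yb.

Let traj t : vec4 := (xa t, xb t, ya t, yb t).

Lemma V_traj_right_cont : filterlim (fun t => V (traj t)) (at_right 0) (locally (V (traj 0))).
Proof.
  destruct sol as (_ & Ca & Cb & Cc & Cd).
  apply filterlim_locally. intro eps.
  destruct (V_continuous (traj 0) eps (cond_pos eps)) as [delta [Hdelta Hnear]].
  set (e := mkposreal (delta / 4) ltac:(lra)).
  apply filterlim_locally with (eps := e) in Ca, Cb, Cc, Cd.
  generalize (filter_and _ _ (filter_and _ _ Ca Cb) (filter_and _ _ Cc Cd)).
  apply filter_imp. intros t [[Ha Hb] [Hc Hd]].
  apply Hnear. unfold traj; cbn.
  change (Rabs (xa t - xa 0) < delta / 4) in Ha. change (Rabs (xb t - xb 0) < delta / 4) in Hb.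
  change (Rabs (ya t - ya 0) < delta / 4) in Hc. change (Rabs (yb t - yb 0) < delta / 4) in Hd.
  lra.
Qed.

Lemma V_traj_derive t : 0 < t -> Rbar_lt t T ->
  is_derive (fun t => V (traj t)) t (dV (traj t) (network_field P (traj t))).
Proof.
  intros Ht HtT. destruct sol as [Hder _].
  destruct (Hder t Ht HtT) as (Da & Db & Dc & Dd). exact (V_derive _ _ _ _ _ _ _ _ _ Da Db Dc Dd).
Qed.

Lemma V_traj_decay rho : 0 < rho -> rho <= r -> V (traj 0) < m * rho ^ 2 ->
  forall t, 0 <= t -> Rbar_lt t T ->
    sqnorm (vsub (traj t) (c1, c2, c3, c4)) < rho ^ 2 /\
    V (traj t) * (1 + s * t / 2) <= V (traj 0).
Proof.
  intros Hrho Hrhor H0 t Ht HtT.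
  set (h t := V (traj t)).
  assert (h_ge0 : forall t, 0 <= h t).
  { intro t'. pose proof (V_lower (traj t')).
    pose proof (sqnorm_ge0 (vsub (traj t') (c1, c2, c3, c4))). unfold h. nra. }
  assert (inside : forall t,
    h t < m * rho ^ 2 -> sqnorm (vsub (traj t) (c1, c2, c3, c4)) < rho ^ 2).
  { intros t' Ht'. apply Rmult_lt_reg_l with m; [assumption|].
    pose proof (V_lower (traj t')). unfold h in Ht'. lra. }
  assert (h_decay : forall t, 0 < t -> Rbar_lt t T -> h t < m * rho ^ 2 -> Derive h t <= - s * h t).
  { intros t' Ht' Ht'T Hlt.
    replace (Derive h t') with (dV (traj t') (network_field P (traj t')))
      by (symmetry; apply is_derive_unique, V_traj_derive; assumption).
    apply V_decrease. apply Rlt_le_trans with (rho ^ 2); [apply inside; assumption|].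
    apply pow_incr; lra. }
  assert (h_derivable : forall t, 0 < t -> Rbar_lt t T -> ex_derive h t)
    by (intros t' Ht' Ht'T; eexists; apply V_traj_derive; assumption).
  split.
  - apply inside, (stays_below h T _ s); assumption || apply V_traj_right_cont.
  - apply (decay_from_initial h T (m * rho ^ 2) s); assumption || apply V_traj_right_cont.
Qed.

End Trajectory.

Lemma V_basin rho : 0 < rho -> rho <= r -> exists delta, 0 < delta /\
  forall T xa xb ya yb, is_solution_on P T xa xb ya yb ->
  dist4 (xa 0) (xb 0) (ya 0) (yb 0) c1 c2 c3 c4 < delta ->
  forall t, 0 <= t -> Rbar_lt t T ->
    sqnorm (vsub (xa t, xb t, ya t, yb t) (c1, c2, c3, c4)) < rho ^ 2 /\
    V (xa t, xb t, ya t, yb t) * (1 + s * t / 2) <= V (xa 0, xb 0, ya 0, yb 0).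
Proof.
  intros Hrho Hrhor. pose proof (Rabs_pos M) as HM.
  set (l := m * rho ^ 2 / (Rabs M + 1)).
  assert (Hl : 0 < l)
    by (apply Rdiv_lt_0_compat; [apply Rmult_lt_0_compat; [lra | apply pow_lt; lra] | lra]).
  exists (sqrt l). split; [apply sqrt_lt_R0; assumption|].
  intros T xa xb ya yb Hsol Hdist.
  apply V_traj_decay; try assumption.
  set (q := sqnorm (vsub (xa 0, xb 0, ya 0, yb 0) (c1, c2, c3, c4))).
  assert (Hq : q < l) by (apply sqrt_lt_0_alt; exact Hdist).
  assert (Hq0 : 0 <= q) by apply sqnorm_ge0.
  assert (HV0 : V (xa 0, xb 0, ya 0, yb 0) <= M * q) by apply V_upper.
  assert (Hl' : (Rabs M + 1) * l = m * rho ^ 2) by (unfold l; field; lra).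
  pose proof (Rle_abs M). nra.
Qed.

Theorem lyapunov_loc_asympt_stable : loc_asympt_stable P c1 c2 c3 c4.
Proof.
  split.
  - intros eps Heps.
    destruct (V_basin (Rmin r eps)) as [delta [Hdelta Hbasin]];
      [apply Rmin_pos; assumption | apply Rmin_l |].
    exists delta; split; [assumption|]. intros T xa xb ya yb Hsol Hdist t Ht HtT.
    destruct (Hbasin T xa xb ya yb Hsol Hdist t Ht HtT) as [Hin _].
    apply Rlt_le_trans with (Rmin r eps); [|apply Rmin_r].
    rewrite <- (sqrt_pow2 (Rmin r eps)) by (left; apply Rmin_pos; assumption).
    apply sqrt_lt_1_alt. split; [vec_simpl; pose_sq_nonneg; lra | exact Hin].
  - destruct (V_basin r) as [delta [Hdelta Hbasin]]; [assumption | apply Rle_refl |].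
    exists delta; split; [assumption|]. intros xa xb ya yb Hsol Hdist.
    set (B := V (xa 0, xb 0, ya 0, yb 0) / m).
    assert (Hdecay : forall t, 0 <= t ->
      sqnorm (vsub (xa t, xb t, ya t, yb t) (c1, c2, c3, c4)) * (1 + s * t / 2) <= B).
    { intros t Ht. destruct (Hbasin p_infty xa xb ya yb Hsol Hdist t Ht I) as [_ Hdec].
      pose proof (V_lower (xa t, xb t, ya t, yb t)).
      unfold B. apply Rmult_le_reg_l with m; [assumption|].
      replace (m * (V (xa 0, xb 0, ya 0, yb 0) / m)) with (V (xa 0, xb 0, ya 0, yb 0))
        by (field; lra).
      assert (0 < 1 + s * t / 2) by nra. nra. }
    assert (Hpos : forall t, 0 <= t -> 0 <= 1 + s * t / 2) by (intros; nra).
    repeat split; apply (is_lim_of_decay _ _ s B s_pos); intros t Ht;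
      (apply Rle_trans
         with (sqnorm (vsub (xa t, xb t, ya t, yb t) (c1, c2, c3, c4)) * (1 + s * t / 2));
       [apply Rmult_le_compat_r; [apply Hpos, Ht|]; vec_simpl; pose_sq_nonneg; lra
       | exact (Hdecay t Ht)]).
Qed.

End Lyapunov.

(** * The Schwarz form of the Jacobian *)

Record jac_entries := mkJac {
  j_ga : R; j_gb : R; j_da : R; j_db : R; j_ka : R; j_kb : R; j_X : R; j_Y : R; j_Z : R }.

Definition jac_apply (J : jac_entries) (u : vec4) : vec4 :=
  let '(u1, u2, u3, u4) := u in
  (- j_ga J * u1 + j_X J * u3 + j_Y J * u4, - j_gb J * u2 + j_Z J * u3,
   j_ka J * u1 - j_da J * u3, j_kb J * u2 - j_db J * u4).

(* The entries of [J + s I]. *)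
Definition jac_shift (J : jac_entries) (s : R) : jac_entries :=
  mkJac (j_ga J - s) (j_gb J - s) (j_da J - s) (j_db J - s)
    (j_ka J) (j_kb J) (j_X J) (j_Y J) (j_Z J).

(* The characteristic polynomial of the matrix is [x^4 + cp1 x^3 + cp2 x^2 + cp3 x + cp4];
   for the network's Jacobian the [cp_i] are the [eps_i] of the statement. *)
Definition cp1 J := j_ga J + j_gb J + j_da J + j_db J.
Definition cp2 J := j_ga J * j_gb J + (j_ga J + j_gb J) * (j_da J + j_db J)
  + j_da J * j_db J - j_ka J * j_X J.
Definition cp3 J := j_da J * j_db J * (j_ga J + j_gb J) + (j_da J + j_db J) * j_ga J * j_gb J
  - j_ka J * (j_db J + j_gb J) * j_X J.
Definition cp4 J := j_ga J * j_gb J * j_da J * j_db J - j_ka J * j_kb J * j_Y J * j_Z J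
  - j_ka J * j_gb J * j_db J * j_X J.

Definition routh_hurwitz J :=
  0 < cp1 J /\ 0 < cp3 J /\ 0 < cp4 J /\ 0 < cp1 J * cp2 J * cp3 J - cp1 J ^ 2 * cp4 J - cp3 J ^ 2.

Definition kry2 J u := snd (jac_apply J u).
Definition kry3 J u := kry2 J (jac_apply J u).
Definition kry4 J u := kry3 J (jac_apply J u).

Definition sb2 J := cp2 J - cp3 J / cp1 J.
Definition sb4 J := cp4 J / sb2 J.
Definition sb3 J := cp3 J / cp1 J - sb4 J.

Definition schwarz_coords J (u : vec4) : vec4 :=
  (snd u, kry2 J u, kry3 J u + sb4 J * snd u, kry4 J u + cp3 J / cp1 J * kry2 J u).

Definition schwarz_step J (z : vec4) : vec4 :=
  let '(z1, z2, z3, z4) := z in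
  (z2, z3 - sb4 J * z1, z4 - sb3 J * z2, - sb2 J * z3 - cp1 J * z4).

(* Back substitution through the triangular system [schwarz_coords J u = z]. *)
Definition schwarz_coords_inv J (z : vec4) : vec4 :=
  let '(z1, z2, z3, z4) := z in
  let u4 := z1 in
  let u2 := (z2 - kry2 J (0, 0, 0, u4)) / j_kb J in
  let u3 := (z3 - sb4 J * u4 - kry3 J (0, u2, 0, u4)) / (j_kb J * j_Z J) in
  let u1 := (z4 - cp3 J / cp1 J * z2 - kry4 J (0, u2, u3, u4)) / (j_kb J * j_Z J * j_ka J) in
  (u1, u2, u3, u4).

Definition schwarz_weights J : vec4 := (sb2 J * sb3 J * sb4 J, sb2 J * sb3 J, sb2 J, 1).

Definition schwarz_form J (u v : vec4) : R :=
  wdot (schwarz_weights J) (schwarz_coords J u) (schwarz_coords J v).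

Ltac jac_simpl := cbv beta iota zeta delta [jac_apply kry2 kry3 kry4 schwarz_coords
  schwarz_coords_inv schwarz_step schwarz_weights schwarz_form
  vadd vscal vsub norm1 sqnorm wdot fst snd] in *.

Lemma cayley_hamilton J u :
  kry4 J (jac_apply J u)
  = - cp1 J * kry4 J u - cp2 J * kry3 J u - cp3 J * kry2 J u - cp4 J * snd u.
Proof. destruct u as [[[u1 u2] u3] u4]; jac_simpl; unfold cp1, cp2, cp3, cp4; ring. Qed.

Lemma schwarz_coords_jac J u : cp1 J <> 0 -> sb2 J <> 0 ->
  schwarz_coords J (jac_apply J u) = schwarz_step J (schwarz_coords J u).
Proof.
  intros Hcp1 Hsb2. unfold schwarz_coords at 1. rewrite cayley_hamilton.
  unfold schwarz_step, schwarz_coords, sb3, sb4, kry4, kry3.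
  change (snd (jac_apply J u)) with (kry2 J u).
  split_vec; try ring.
  replace (cp2 J) with (sb2 J + cp3 J / cp1 J) by (unfold sb2; ring).
  field. tauto.
Qed.

Lemma wdot_schwarz_step J z :
  wdot (schwarz_weights J) z (schwarz_step J z) = - cp1 J * snd z ^ 2.
Proof. destruct z as [[[z1 z2] z3] z4]; jac_simpl; unfold sb3; ring. Qed.

(* [2 B(u, J u)] is the derivative of [B(u, u)] along [u' = J u]. *)
Lemma schwarz_form_jac J u : cp1 J <> 0 -> sb2 J <> 0 ->
  schwarz_form J u (jac_apply J u) = - cp1 J * snd (schwarz_coords J u) ^ 2.
Proof.
  intros Hcp1 Hsb2. unfold schwarz_form.
  rewrite schwarz_coords_jac by assumption. apply wdot_schwarz_step.
Qed.

Lemma schwarz_params_pos J :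
  routh_hurwitz J -> 0 < sb2 J /\ 0 < sb3 J /\ 0 < sb4 J.
Proof.
  intros (H1 & H3 & H4 & H).
  assert (HD : 0 < cp1 J * cp2 J - cp3 J) by nra.
  assert (Hsb2 : sb2 J = (cp1 J * cp2 J - cp3 J) / cp1 J) by (unfold sb2; field; lra).
  assert (Hsb2p : 0 < sb2 J) by (rewrite Hsb2; apply Rdiv_lt_0_compat; lra).
  assert (Hsb4p : 0 < sb4 J) by (apply Rdiv_lt_0_compat; lra).
  repeat split; try assumption.
  unfold sb3, sb4. rewrite Hsb2.
  replace (cp3 J / cp1 J - cp4 J / ((cp1 J * cp2 J - cp3 J) / cp1 J))
    with ((cp3 J * (cp1 J * cp2 J - cp3 J) - cp1 J ^ 2 * cp4 J) / (cp1 J * (cp1 J * cp2 J - cp3 J)))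
    by (field; lra).
  apply Rdiv_lt_0_compat; nra.
Qed.

Lemma schwarz_coords_add J u v :
  schwarz_coords J (vadd u v) = vadd (schwarz_coords J u) (schwarz_coords J v).
Proof.
  destruct u as [[[u1 u2] u3] u4], v as [[[v1 v2] v3] v4]; jac_simpl.
  split_vec; ring.
Qed.

Lemma schwarz_coords_scal J k u :
  schwarz_coords J (vscal k u) = vscal k (schwarz_coords J u).
Proof. destruct u as [[[u1 u2] u3] u4]; jac_simpl; split_vec; ring. Qed.

Lemma schwarz_coords_inv_add J y z :
  schwarz_coords_inv J (vadd y z) = vadd (schwarz_coords_inv J y) (schwarz_coords_inv J z).
Proof.
  destruct y as [[[y1 y2] y3] y4], z as [[[z1 z2] z3] z4]; jac_simpl.
  split_vec; unfold Rdiv; ring.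
Qed.

Lemma schwarz_coords_inv_scal J k z :
  schwarz_coords_inv J (vscal k z) = vscal k (schwarz_coords_inv J z).
Proof. destruct z as [[[z1 z2] z3] z4]; jac_simpl; split_vec; unfold Rdiv; ring. Qed.

Lemma schwarz_coords_invK J u :
  j_ka J <> 0 -> j_kb J <> 0 -> j_Z J <> 0 -> cp1 J <> 0 ->
  schwarz_coords_inv J (schwarz_coords J u) = u.
Proof.
  intros Hka Hkb HZ Hcp1. destruct u as [[[u1 u2] u3] u4]; jac_simpl.
  split_vec; field; tauto.
Qed.

Lemma schwarz_form_add_r J u v v' :
  schwarz_form J u (vadd v v') = schwarz_form J u v + schwarz_form J u v'.
Proof. unfold schwarz_form. rewrite schwarz_coords_add. apply wdot_add_r. Qed.

Lemma schwarz_form_scal_r J u k v : schwarz_form J u (vscal k v) = k * schwarz_form J u v.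
Proof. unfold schwarz_form. rewrite schwarz_coords_scal. apply wdot_scal_r. Qed.

Lemma schwarz_form_sym J u v : schwarz_form J u v = schwarz_form J v u.
Proof. apply wdot_comm. Qed.

Lemma schwarz_form_bound J :
  exists K, 0 <= K /\ forall u v, Rabs (schwarz_form J u v) <= K * norm1 u * norm1 v.
Proof.
  destruct (linear_norm1_bound (schwarz_coords J) (schwarz_coords_add J) (schwarz_coords_scal J))
    as [C [HC Hz]].
  pose proof (norm1_ge0 (schwarz_weights J)).
  exists (norm1 (schwarz_weights J) * C ^ 2); split; [nra|].
  intros u v. unfold schwarz_form.
  eapply Rle_trans; [apply wdot_abs_le|].
  pose proof (Hz u); pose proof (Hz v).
  pose proof (norm1_ge0 (schwarz_coords J u)); pose proof (norm1_ge0 (schwarz_coords J v)).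
  replace (norm1 (schwarz_weights J) * C ^ 2 * norm1 u * norm1 v)
    with (norm1 (schwarz_weights J) * ((C * norm1 u) * (C * norm1 v))) by ring.
  rewrite Rmult_assoc. apply Rmult_le_compat_l; [assumption|].
  apply Rmult_le_compat; assumption.
Qed.

Lemma schwarz_form_coercive J :
  routh_hurwitz J -> j_ka J <> 0 -> j_kb J <> 0 -> j_Z J <> 0 ->
  exists m, 0 < m /\ forall u, m * sqnorm u <= schwarz_form J u u.
Proof.
  intros RH Hka Hkb HZ.
  destruct (schwarz_params_pos J RH) as (H2 & H3 & H4).
  assert (Hcp1 : cp1 J <> 0) by (destruct RH; lra).
  destruct (linear_norm1_bound (schwarz_coords_inv J) (schwarz_coords_inv_add J)
              (schwarz_coords_inv_scal J)) as [C [HC Hinv]].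
  set (wmin := Rmin (Rmin (sb2 J * sb3 J * sb4 J) (sb2 J * sb3 J)) (Rmin (sb2 J) 1)).
  assert (H23 : 0 < sb2 J * sb3 J) by (apply Rmult_lt_0_compat; lra).
  assert (H234 : 0 < sb2 J * sb3 J * sb4 J) by (apply Rmult_lt_0_compat; lra).
  assert (Hwmin : 0 < wmin) by (unfold wmin; repeat apply Rmin_pos; lra).
  exists (wmin / (4 * C ^ 2 + 1)); split.
  { apply Rdiv_lt_0_compat; nra. }
  intro u. set (z := schwarz_coords J u).
  assert (Hz : wmin * sqnorm z <= schwarz_form J u u).
  { apply wdot_coercive; lra. }
  assert (Hu : norm1 u <= C * norm1 z).
  { rewrite <- (schwarz_coords_invK J u) at 1 by assumption. apply Hinv. }
  pose proof (sqnorm_le_norm1_sq u); pose proof (norm1_sq_le z).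
  pose proof (norm1_ge0 u); pose proof (sqnorm_ge0 z).
  assert (Hsq : sqnorm u <= 4 * C ^ 2 * sqnorm z).
  { apply Rle_trans with ((C * norm1 z) ^ 2); [|nra].
    apply Rle_trans with (norm1 u ^ 2); [assumption|]. apply pow_incr; lra. }
  apply Rmult_le_reg_l with (4 * C ^ 2 + 1); [nra|].
  replace ((4 * C ^ 2 + 1) * (wmin / (4 * C ^ 2 + 1) * sqnorm u)) with (wmin * sqnorm u)
    by (field; nra).
  pose proof (sqnorm_ge0 u). nra.
Qed.

Lemma jac_apply_shift J s u :
  jac_apply J u = vadd (jac_apply (jac_shift J s) u) (vscal (- s) u).
Proof. destruct u as [[[u1 u2] u3] u4]; jac_simpl; cbn; split_vec; ring. Qed.

Lemma schwarz_form_diag J u d :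
  schwarz_form J (vadd u d) (vadd u d)
  = schwarz_form J u u + 2 * schwarz_form J u d + schwarz_form J d d.
Proof.
  rewrite !schwarz_form_add_r, (schwarz_form_sym J (vadd u d) u), (schwarz_form_sym J (vadd u d) d),
    !schwarz_form_add_r, (schwarz_form_sym J d u).
  ring.
Qed.

Lemma schwarz_form_upper J : exists M, forall u, schwarz_form J u u <= M * sqnorm u.
Proof.
  destruct (schwarz_form_bound J) as [K [HK HB]]. exists (4 * K). intro u.
  pose proof (HB u u). pose proof (Rle_abs (schwarz_form J u u)).
  assert (K * norm1 u ^ 2 <= K * (4 * sqnorm u))
    by (apply Rmult_le_compat_l; [assumption | apply norm1_sq_le]).
  nra.
Qed.

Lemma schwarz_form_centered_continuous J c x eps : 0 < eps ->
  exists delta, 0 < delta /\ forall y, norm1 (vsub y x) < delta ->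
    Rabs (schwarz_form J (vsub y c) (vsub y c) - schwarz_form J (vsub x c) (vsub x c)) < eps.
Proof.
  intro Heps. destruct (schwarz_form_bound J) as [K [HK HB]].
  set (u := vsub x c). set (a := K * (1 + 2 * norm1 u) + 1).
  assert (Ha : 0 < a) by (pose proof (norm1_ge0 u); unfold a; nra).
  exists (Rmin 1 (eps / a)); split; [apply Rmin_pos; [lra | apply Rdiv_lt_0_compat; lra]|].
  intros y Hy. rewrite <- (vsub_vsub x y c) in Hy. fold u in Hy.
  set (d := vsub (vsub y c) u) in *.
  assert (Hd1 : norm1 d < 1) by (eapply Rlt_le_trans; [exact Hy | apply Rmin_l]).
  assert (Hda : norm1 d * a < eps).
  { apply Rlt_le_trans with (Rmin 1 (eps / a) * a); [apply Rmult_lt_compat_r; assumption|].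
    apply Rle_trans with (eps / a * a); [apply Rmult_le_compat_r; [lra | apply Rmin_r]|].
    right; field; lra. }
  rewrite <- (vadd_vsub u (vsub y c)). fold d. rewrite schwarz_form_diag.
  replace (schwarz_form J u u + 2 * schwarz_form J u d + schwarz_form J d d - schwarz_form J u u)
    with (2 * schwarz_form J u d + schwarz_form J d d) by ring.
  pose proof (HB u d); pose proof (HB d d); pose proof (norm1_ge0 u); pose proof (norm1_ge0 d).
  eapply Rle_lt_trans; [apply Rabs_triang|]. rewrite Rabs_mult, (Rabs_right 2) by lra.
  unfold a in Hda. nra.
Qed.

Lemma schwarz_form_derive J c (f1 f2 f3 f4 : R -> R) t v1 v2 v3 v4 :
  is_derive f1 t v1 -> is_derive f2 t v2 -> is_derive f3 t v3 -> is_derive f4 t v4 ->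
  is_derive
    (fun t => schwarz_form J (vsub (f1 t, f2 t, f3 t, f4 t) c) (vsub (f1 t, f2 t, f3 t, f4 t) c)) t
    (2 * schwarz_form J (vsub (f1 t, f2 t, f3 t, f4 t) c) (v1, v2, v3, v4)).
Proof.
  intros D1 D2 D3 D4. destruct c as [[[c1 c2] c3] c4]. jac_simpl.
  auto_derive.
  - repeat split; eexists; eassumption.
  - change (Derive (fun x => f1 x) t) with (Derive f1 t);
    change (Derive (fun x => f2 x) t) with (Derive f2 t);
    change (Derive (fun x => f3 x) t) with (Derive f3 t);
    change (Derive (fun x => f4 x) t) with (Derive f4 t).
    rewrite (is_derive_unique _ _ _ D1), (is_derive_unique _ _ _ D2),
      (is_derive_unique _ _ _ D3), (is_derive_unique _ _ _ D4).
    ring.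
Qed.

(* For [u' = J u + e] with [e = o(u)], the Schwarz form of [J + s I] decays at rate [s]. *)
Lemma schwarz_form_robust_decrease J s :
  0 < s -> routh_hurwitz (jac_shift J s) -> j_ka J <> 0 -> j_kb J <> 0 -> j_Z J <> 0 ->
  exists eta, 0 < eta /\ forall u e, norm1 e <= eta * norm1 u ->
    2 * schwarz_form (jac_shift J s) u (vadd (jac_apply J u) e)
    <= - s * schwarz_form (jac_shift J s) u u.
Proof.
  intros Hs RH Hka Hkb HZ. set (Js := jac_shift J s) in *.
  destruct (schwarz_form_coercive Js RH Hka Hkb HZ) as [m [Hm Hlow]].
  destruct (schwarz_form_bound Js) as [K [HK Hup]].
  assert (Hcp1 : cp1 Js <> 0) by (destruct RH; lra).
  assert (Hsb2 : sb2 Js <> 0) by (destruct (schwarz_params_pos Js RH); lra).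
  exists (s * m / (8 * K + 1)); split; [apply Rdiv_lt_0_compat; nra|].
  intros u e He.
  rewrite schwarz_form_add_r, (jac_apply_shift J s), schwarz_form_add_r, schwarz_form_scal_r.
  fold Js. rewrite schwarz_form_jac by assumption.
  assert (HKeta : 8 * K * (s * m / (8 * K + 1)) <= s * m).
  { apply Rmult_le_reg_r with (8 * K + 1); [lra|].
    replace (8 * K * (s * m / (8 * K + 1)) * (8 * K + 1)) with (8 * K * (s * m)) by (field; lra).
    nra. }
  set (eta := s * m / (8 * K + 1)) in *.
  assert (Heta : 0 < eta) by (apply Rdiv_lt_0_compat; nra).
  pose proof (Hlow u) as HV. pose proof (Hup u e) as HBe.
  pose proof (norm1_ge0 u); pose proof (norm1_ge0 e);
  pose proof (sqnorm_ge0 u); pose proof (norm1_sq_le u).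
  pose proof (pow2_ge_0 (snd (schwarz_coords Js u))). destruct RH as [Hcp1p _].
  assert (HBe' : Rabs (schwarz_form Js u e) <= K * eta * norm1 u ^ 2).
  { eapply Rle_trans; [exact HBe|].
    replace (K * eta * norm1 u ^ 2) with (K * norm1 u * (eta * norm1 u)) by ring.
    apply Rmult_le_compat_l; [nra | exact He]. }
  pose proof (Rle_abs (schwarz_form Js u e)).
  assert (HKe0 : 0 <= K * eta) by nra.
  assert (Hpert : 2 * schwarz_form Js u e <= 8 * K * eta * sqnorm u) by nra.
  assert (Hsmall : 8 * K * eta * sqnorm u <= s * schwarz_form Js u u) by nra.
  assert (0 <= cp1 Js * snd (schwarz_coords Js u) ^ 2) by (apply Rmult_le_pos; lra).
  lra.
Qed.

(* The Routh-Hurwitz conditions are open, so they survive shifting the spectrum. *)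
Lemma routh_hurwitz_shift J :
  routh_hurwitz J -> exists s, 0 < s /\ routh_hurwitz (jac_shift J s).
Proof.
  intro RH.
  assert (Hev : locally 0 (fun s => routh_hurwitz (jac_shift J s))).
  { unfold routh_hurwitz, cp1, cp2, cp3, cp4 in *.
    cbn [jac_shift j_ga j_gb j_da j_db j_ka j_kb j_X j_Y j_Z].
    destruct RH as (H1 & H3 & H4 & H).
    repeat apply filter_and; apply eventually_pos_near; try (auto_derive; exact I);
      rewrite ?Rminus_0_r; assumption. }
  destruct Hev as [d Hd]. pose proof (cond_pos d).
  exists (d / 2). split; [lra|].
  apply Hd. change (Rabs (d / 2 - 0) < d). rewrite Rminus_0_r, Rabs_right; lra.
Qed.

(** * Linearization of the network *)

Local Notation R2 := (prod_NormedModule R_AbsRing R_NormedModule R_NormedModule).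

Lemma differentiable_pt_lim_proj2_0 (f : R -> R) x y l :
  is_derive f y l -> differentiable_pt_lim (fun _ v => f v) x y 0 l.
Proof.
  intro Hf. apply filterdiff_differentiable_pt_lim.
  eapply filterdiff_ext_lin.
  - apply (filterdiff_comp' (fun u : R2 => snd u) f (x, y));
      [apply filterdiff_linear, is_linear_snd | exact Hf].
  - intros [u v]. cbv [scal plus mult zero fst snd]; cbn. cbv [mult]; cbn. ring.
Qed.

Lemma ratio_differentiable c a b : 0 < 1 + a + b ->
  differentiable_pt_lim (fun a b => c * a / (1 + a + b)) a b
    (c * (1 + b) / (1 + a + b) ^ 2) (- (c * a) / (1 + a + b) ^ 2).
Proof.
  intro HD. apply filterdiff_differentiable_pt_lim.
  assert (dD : @filterdiff _ R2 R_NormedModule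
                 (fun u => plus (plus 1 (fst u)) (snd u)) (locally (a, b))
                 (fun u => plus (plus zero (fst u)) (snd u))).
  { apply (@filterdiff_plus_fct R_AbsRing R2 R_NormedModule); [apply locally_filter| |].
    - apply (@filterdiff_plus_fct R_AbsRing R2 R_NormedModule); [apply locally_filter| |].
      + apply filterdiff_const.
      + apply filterdiff_linear, is_linear_fst.
    - apply filterdiff_linear, is_linear_snd. }
  assert (dinv : @filterdiff _ R2 R_NormedModule
                  (fun u => / plus (plus 1 (fst u)) (snd u)) (locally (a, b))
                  (fun u => scal (plus (plus zero (fst u)) (snd u)) (- 1 / (1 + a + b) ^ 2))).
  { apply (filterdiff_comp' _ Rinv _ _ (fun y => scal y (- 1 / (1 + a + b) ^ 2)) dD).
    apply (is_derive_inv (fun x => x) _ 1 (is_derive_id _)).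
    unfold plus; cbn. lra. }
  assert (dnum : @filterdiff _ R2 R_NormedModule (fun u => scal (fst u) c) (locally (a, b))
                   (fun u => scal (fst u) c)).
  { apply filterdiff_linear, (is_linear_comp (fun u : R2 => fst u) (fun k : R_AbsRing => scal k c));
      [apply is_linear_fst | exact (@is_linear_scal_l R_AbsRing R_NormedModule c)]. }
  eapply filterdiff_ext.
  2:{ eapply filterdiff_ext_lin.
      - apply (filterdiff_mult_fct _ _ _ _ _ Rmult_comm dnum dinv).
      - intros [u v]. cbv [scal plus mult zero fst snd]; cbn. cbv [mult]; cbn. field. lra. }
  intros [u v]. cbv [scal plus mult zero fst snd]; cbn. cbv [mult]; cbn. unfold Rdiv. ring.
Qed.

Ltac pos_nonzero :=
  repeat split; apply Rgt_not_eq; repeat (apply Rplus_lt_0_compat || apply Rmult_lt_0_compat); lra.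

Definition hill_a (P : params) (p q : R) : R :=
  m_a P * (p / th_aa P) ^ (n_aa P) / (1 + (p / th_aa P) ^ (n_aa P) + (q / th_b P) ^ (n_b P)).
Definition hill_b (P : params) (p : R) : R := m_b P / (1 + (p / th_a P) ^ (n_a P)).

Lemma is_derive_scaled_pow th n p :
  is_derive (fun p => (p / th) ^ n) p (INR n * (p / th) ^ pred n / th).
Proof. auto_derive; [exact I | unfold Rdiv; ring]. Qed.

Lemma hill_a_differentiable P pa pb : params_ok P -> 0 < pa -> 0 < pb ->
  differentiable_pt_lim (hill_a P) pa pb (Xq P pa pb) (Yq P pa pb).
Proof.
  intros Hok Ha Hb.
  destruct P as [ma mb ga gb ka kb da db tha thb thaa A1 B1 na nb naa].
  destruct Hok as (Hma & _ & _ & _ & _ & _ & _ & _ & _ & Hthb & Hthaa & _ & _ & _ & Hnb & Hnaa).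
  cbn in *.
  assert (HU : 0 < (pa / thaa) ^ naa) by (apply pow_lt, Rdiv_lt_0_compat; lra).
  assert (HV : 0 < (pb / thb) ^ nb) by (apply pow_lt, Rdiv_lt_0_compat; lra).
  pose proof (differentiable_pt_lim_comp (fun a b => ma * a / (1 + a + b))
    (fun u _ => (u / thaa) ^ naa) (fun _ v => (v / thb) ^ nb) pa pb _ _ _ 0 0 _
    (ratio_differentiable ma ((pa / thaa) ^ naa) ((pb / thb) ^ nb) ltac:(lra))
    (differentiable_pt_lim_proj1_0 _ pa pb _
       (proj1 (is_derive_Reals _ _ _) (is_derive_scaled_pow thaa naa pa)))
    (differentiable_pt_lim_proj2_0 _ pa pb _ (is_derive_scaled_pow thb nb pb))) as Hc.
  cbn in Hc. unfold hill_a; cbn.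
  match type of Hc with differentiable_pt_lim _ _ _ ?lx ?ly =>
    replace (Xq _ pa pb) with lx; [replace (Yq _ pa pb) with ly; [exact Hc|]|] end.
  - unfold Yq, Dab; cbn.
    destruct nb as [|k]; [lia|]. cbn [pred]. rewrite Nat.sub_succ, Nat.sub_0_r.
    unfold Rdiv; rewrite !Rpow_mult_distr, !pow_inv. cbn.
    assert (0 < pa ^ naa) by (apply pow_lt; lra). assert (0 < pb ^ k) by (apply pow_lt; lra).
    assert (0 < thaa ^ naa) by (apply pow_lt; lra). assert (0 < thb ^ k) by (apply pow_lt; lra).
    field. pos_nonzero.
  - unfold Xq, Dab; cbn.
    destruct naa as [|k]; [lia|]. cbn [pred]. rewrite Nat.sub_succ, Nat.sub_0_r.
    unfold Rdiv; rewrite !Rpow_mult_distr, !pow_inv. cbn.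
    assert (0 < pa ^ k) by (apply pow_lt; lra). assert (0 < pb ^ nb) by (apply pow_lt; lra).
    assert (0 < thaa ^ k) by (apply pow_lt; lra). assert (0 < thb ^ nb) by (apply pow_lt; lra).
    field. pos_nonzero.
Qed.

Lemma hill_b_derive P pa pb : params_ok P -> 0 < pa -> is_derive (hill_b P) pa (Zq P pa pb).
Proof.
  intros Hok Ha.
  destruct P as [ma mb ga gb ka kb da db tha thb thaa A1 B1 na nb naa].
  destruct Hok as (_ & Hmb & _ & _ & _ & _ & _ & _ & Htha & _ & _ & _ & _ & Hna & _ & _); cbn in *.
  assert (0 < (pa / tha) ^ na) by (apply pow_lt, Rdiv_lt_0_compat; lra).
  unfold hill_b; cbn. auto_derive; [lra|].
  unfold Zq; cbn. destruct na as [|k]; [lia|]. cbn [pred]. rewrite Nat.sub_succ, Nat.sub_0_r.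
  unfold Rdiv; rewrite !Rpow_mult_distr, !pow_inv. cbn.
  assert (0 < pa ^ k) by (apply pow_lt; lra). assert (0 < tha ^ k) by (apply pow_lt; lra).
  field. pos_nonzero.
Qed.

Lemma Zq_lt0 P pa pb : params_ok P -> 0 < pa -> Zq P pa pb < 0.
Proof.
  intros (_ & Hmb & _ & _ & _ & _ & _ & _ & Htha & _ & _ & _ & _ & Hna & _ & _) Ha.
  unfold Zq. apply Ropp_lt_gt_0_contravar, Rdiv_lt_0_compat.
  - repeat apply Rmult_lt_0_compat; try apply pow_lt; try lra. apply lt_0_INR. lia.
  - pose proof (pow_lt pa (n_a P) Ha); pose proof (pow_lt (th_a P) (n_a P) Htha).
    apply pow_lt. lra.
Qed.

Definition network_jacobian (P : params) (pa pb : R) : jac_entries :=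
  mkJac (gam_a P) (gam_b P) (del_a P) (del_b P) (k_a P) (k_b P)
    (Xq P pa pb) (Yq P pa pb) (Zq P pa pb).

Definition network_remainder (P : params) (pa pb : R) (u : vec4) : vec4 :=
  let '(_, _, u3, u4) := u in
  (hill_a P (pa + u3) (pb + u4) - hill_a P pa pb - (Xq P pa pb * u3 + Yq P pa pb * u4),
   hill_b P (pa + u3) - hill_b P pa - Zq P pa pb * u3, 0, 0).

Lemma network_field_linearization P ra rb pa pb x :
  is_steady_state P ra rb pa pb ->
  network_field P x = vadd (jac_apply (network_jacobian P pa pb) (vsub x (ra, rb, pa, pb)))
                           (network_remainder P pa pb (vsub x (ra, rb, pa, pb))).
Proof.
  intros (E1 & E2 & E3 & E4). destruct x as [[[x1 x2] x3] x4].
  unfold network_field, network_remainder, network_jacobian; vec_simpl; cbn.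
  replace (pa + (x3 - pa)) with x3 by ring. replace (pb + (x4 - pb)) with x4 by ring.
  unfold F_ra, F_rb, F_pa, F_pb, hill_a, hill_b in *.
  split_vec; lra.
Qed.

Lemma network_remainder_small P pa pb : params_ok P -> 0 < pa -> 0 < pb ->
  forall eta, 0 < eta -> exists r, 0 < r /\
    forall u, sqnorm u < r ^ 2 -> norm1 (network_remainder P pa pb u) <= eta * norm1 u.
Proof.
  intros Hok Ha Hb eta Heta. assert (Heta2 : 0 < eta / 2) by lra.
  pose proof (hill_a_differentiable P pa pb Hok Ha Hb (mkposreal _ Heta2)) as Da.
  pose proof (differentiable_pt_lim_proj1_0 _ pa pb _
    (proj1 (is_derive_Reals _ _ _) (hill_b_derive P pa pb Hok Ha)) (mkposreal _ Heta2)) as Db.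
  destruct (locally_2d_and _ _ pa pb Da Db) as [d Hd].
  exists d. split; [apply cond_pos|].
  intros [[[u1 u2] u3] u4] Hu. cbn [sqnorm] in Hu.
  pose proof (cond_pos d).
  pose_sq_nonneg.
  assert (Hu3 : Rabs u3 < d) by (apply abs_lt_of_sq_lt; lra).
  assert (Hu4 : Rabs u4 < d) by (apply abs_lt_of_sq_lt; lra).
  destruct (Hd (pa + u3) (pb + u4)) as [Ea Eb].
  { replace (pa + u3 - pa) with u3 by ring. exact Hu3. }
  { replace (pb + u4 - pb) with u4 by ring. exact Hu4. }
  cbn in Ea, Eb.
  replace (pa + u3 - pa) with u3 in Ea, Eb by ring. replace (pb + u4 - pb) with u4 in Ea, Eb by ring.
  cbn [network_remainder norm1]. rewrite Rabs_R0.
  pose_abs_nonneg.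
  assert (Rmax (Rabs u3) (Rabs u4) <= Rabs u3 + Rabs u4) by (apply Rmax_lub; lra).
  rewrite Rmult_0_l, Rplus_0_r in Eb. nra.
Qed.

Theorem theorem1 (P : params) (ra rb pa pb : R) :
  params_ok P ->
  is_steady_state P ra rb pa pb ->
  0 < pa -> 0 < pb ->
  0 < gn_eps1 P -> 0 < gn_eps3 P pa pb -> 0 < gn_eps4 P pa pb ->
  0 < gn_eps1 P * gn_eps2 P pa pb * gn_eps3 P pa pb - (gn_eps1 P) ^ 2 * gn_eps4 P pa pb
      - (gn_eps3 P pa pb) ^ 2 ->
  loc_asympt_stable P ra rb pa pb.
Proof.
  intros Hok Hss Hpa Hpb H1 H3 H4 H.
  set (J := network_jacobian P pa pb).
  assert (RH : routh_hurwitz J) by (repeat split; assumption).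
  destruct (routh_hurwitz_shift J RH) as [s [Hs RHs]].
  assert (Hka : j_ka J <> 0) by (destruct Hok as (_ & _ & _ & _ & ? & _); cbn; lra).
  assert (Hkb : j_kb J <> 0) by (destruct Hok as (_ & _ & _ & _ & _ & ? & _); cbn; lra).
  assert (HZ : j_Z J <> 0) by (apply Rlt_not_eq, Zq_lt0; assumption).
  destruct (schwarz_form_coercive (jac_shift J s) RHs Hka Hkb HZ) as [m [Hm Hlow]].
  destruct (schwarz_form_upper (jac_shift J s)) as [M Hup].
  destruct (schwarz_form_robust_decrease J s Hs RHs Hka Hkb HZ) as [eta [Heta Hdec]].
  destruct (network_remainder_small P pa pb Hok Hpa Hpb eta Heta) as [r [Hr Hrem]].
  set (B := schwarz_form (jac_shift J s)) in *. set (c := (ra, rb, pa, pb) : vec4).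
  apply (lyapunov_loc_asympt_stable P ra rb pa pb (fun x => B (vsub x c) (vsub x c))
           (fun x v => 2 * B (vsub x c) v) m M s r); try assumption; fold c.
  - intro x. apply Hlow.
  - intro x. apply Hup.
  - intros x eps Heps. apply schwarz_form_centered_continuous, Heps.
  - intros. apply schwarz_form_derive; assumption.
  - intros x Hx. rewrite (network_field_linearization P ra rb pa pb x Hss).
    apply Hdec, Hrem, Hx.
Qed.
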